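(* For all positive integers $m_1,\dots,m_S$, $$B(m_1,\dots,m_S)=\sum_{\ell_1=0}^{m_1-1}\cdots\sum_{\ell_S=0}^{m_S-1}\frac{(\ell_1+\dots+\ell_S)!}{\ell_1!\cdots\ell_S!}.$$
   Context: For nonnegative integers $n_1,\dots,n_S$, $E(n_1,\dots,n_S)$ denotes the number of block derangements: $S$ players hold $n_1,\dots,n_S$ distinct cards respectively; all $N=n_1+\dots+n_S$ cards are redealt so that player $j$ again receives exactly $n_j$ cards (only which cards each player gets matters); $E$ counts the deals in which no player receives any card he originally held. Equivalently, $E(n_1,\dots,n_S)$ is the coefficient of $x_1^{n_1}\cdots x_S^{n_S}$ in $\prod_{j=1}^S(x_1+\dots+x_S-x_j)^{n_j}$. By convention $E(0,\dots,0)=1$. For positive integers $m_1,\dots,m_S$, $B(m_1,\dots,m_S)=\sum_{k_1=1}^{m_1}\cdots\sum_{k_S=1}^{m_S}\binom{m_1}{k_1}\cdots\binom{m_S}{k_S}E(k_1-1,\dots,k_S-1)$. *)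

From mathcomp Require Import all_boot.
Set Implicit Arguments. Unset Strict Implicit. Unset Printing Implicit Defensive.

(* Cards: player j holds the cards (j, a) with a < n j. *)
Definition card_t (S : nat) (n : 'I_S -> nat) : finType :=
  {j : 'I_S & 'I_(n j)}.

Definition block_derangement (S : nat) (n : 'I_S -> nat)
    (f : {ffun card_t n -> 'I_S}) : bool :=
  [forall j : 'I_S, #|[pred c : card_t n | f c == j]| == n j]
  && [forall c : card_t n, f c != tag c].

Definition E (S : nat) (n : 'I_S -> nat) : nat :=
  #|[pred f : {ffun card_t n -> 'I_S} | block_derangement f]|.

(* B(m_1,...,m_S) = sum_{k_j=1}^{m_j} prod_j C(m_j,k_j) E(k_1-1,...,k_S-1);
   we index by l_j = k_j - 1 ranging over 0 <= l_j < m_j, drawn from a common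
   bound 'I_(max_j m_j). *)
Definition B (S : nat) (m : 'I_S -> nat) : nat :=
  \sum_(l : {ffun 'I_S -> 'I_(\max_(j < S) m j)} | [forall j, l j < m j])
     (\prod_(j < S) 'C(m j, (l j).+1)) * E (fun j => nat_of_ord (l j)).

Definition multinom (S : nat) (l : 'I_S -> nat) : nat :=
  (\sum_(j < S) l j)`! %/ \prod_(j < S) (l j)`!.

From mathcomp Require Import all_boot.
From Stdlib Require Import FunctionalExtensionality.
Set Implicit Arguments. Unset Strict Implicit. Unset Printing Implicit Defensive.

(* Write p = (p_1,...,p_S) and let the cards of
   card_t p be owned by their tag.  The multinomial coefficient
   multinom p counts the deals of these cards in which player j receives
   exactly p_j cards (Section Multinomial).  Classifying such a deal by
   the set A of cards that change hands, a deal that moves exactly A is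
   a block derangement of A, where player j now holds n_j = #(A owned by j)
   cards (Section Relabel); there are prod_j C(p_j, n_j) such sets A with
   prescribed n (Lemma card_sets_by_owner).  Hence
     multinom p = sum_n prod_j C(p_j, n_j) E(n)          (multinom_expansion).
   Summing over the box 0 <= p_j < m_j and exchanging the sums, the
   hockey-stick identity sum_{p < m} C(p, n) = C(m, n+1) turns the inner
   sum into prod_j C(m_j, n_j + 1), which vanishes unless n lies in the
   box: this is exactly B(m). *)

Lemma hockey_stick k n : \sum_(0 <= a < k) 'C(a, n) = 'C(k, n.+1).
Proof.
elim: k => [|k IHk]; first by rewrite big_geq.
by rewrite big_nat_recr //= IHk binS.
Qed.

(* Summing a product of binomials over a box factors into hockey sticks. *)
Lemma box_sum_binomial (S M : nat) (m n : 'I_S -> nat) :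
    (forall j, m j <= M) ->
  \sum_(l : {ffun 'I_S -> 'I_M} | [forall j, l j < m j]) \prod_(j < S) 'C(l j, n j)
  = \prod_(j < S) 'C(m j, (n j).+1).
Proof.
move=> hM; have -> : \prod_(j < S) 'C(m j, (n j).+1) =
    \prod_(j < S) \sum_(a : 'I_M | a < m j) 'C(a, n j).
  apply: eq_bigr => j _.
  rewrite -hockey_stick -(big_mkord (fun a => a < m j) (fun a => 'C(a, n j))).
  by rewrite (big_nat_widen _ _ _ _ _ (hM j)) big_mkcondr.
rewrite bigA_distr_big_dep; apply: eq_bigl => l.
by apply/forallP/familyP => H j; apply: H.
Qed.

Section Multinomial.

Variable S : nat.
Implicit Types (q : 'I_S -> nat) (T : finType).

Definition n_words (N : nat) q : nat :=
  \sum_(w : N.-tuple 'I_S) [forall j, count_mem j w == q j].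

Definition remove_letter q (x : 'I_S) : 'I_S -> nat := fun j => q j - (x == j).

Lemma sum_tupleS (T : finType) N (F : N.+1.-tuple T -> nat) :
  \sum_(w : N.+1.-tuple T) F w = \sum_(x : T) \sum_(w : N.-tuple T) F [tuple of x :: w].
Proof.
rewrite pair_big /= (reindex (fun p : T * N.-tuple T => [tuple of p.1 :: p.2])) //=.
exists (fun w : N.+1.-tuple T => (thead w, [tuple of behead w])).
  by move=> [x w] _ /=; congr (_, _); apply: val_inj.
by move=> w _; apply: val_inj; case: w => [[|a s] //= _].
Qed.

(* A word of content q is a first letter x followed by a word of content
   q minus x. *)
Lemma n_wordsS N q :
  n_words N.+1 q = \sum_(x | 0 < q x) n_words N (remove_letter q x).
Proof.
rewrite /n_words sum_tupleS [RHS]big_mkcond /=; apply: eq_bigr => x _.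
case: ifP => hx; last first.
  apply: big1 => w _; apply/eqP; rewrite eqb0; apply/negP => /forallP /(_ x).
  by rewrite /= eqxx add1n => /eqP hqx; rewrite -hqx in hx.
apply: eq_bigr => w _; congr nat_of_bool.
apply/forallP/forallP => H j; move: (H j) => /= /eqP Hj; apply/eqP.
  by rewrite /remove_letter -Hj addKn.
by rewrite Hj /remove_letter subnKC //; case: eqP => [<-|].
Qed.

Lemma sum_remove_letter q x :
  0 < q x -> (\sum_j remove_letter q x j).+1 = \sum_j q j.
Proof.
move=> hx; rewrite [in RHS](bigD1 x) // [in LHS](bigD1 x) //= /remove_letter /= eqxx.
rewrite -addSn subn1 prednK //; congr (_ + _).
by apply: eq_bigr => j hj; rewrite eq_sym (negbTE hj) subn0.
Qed.

Lemma prod_fact_remove_letter q x :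
  0 < q x -> \prod_j (q j)`! = q x * \prod_j (remove_letter q x j)`!.
Proof.
move=> hx; rewrite [in LHS](bigD1 x) // [in RHS](bigD1 x) //=.
rewrite /remove_letter /= eqxx mulnA.
rewrite -(prednK hx) subn1 /= -factS; congr (_ * _).
by apply: eq_bigr => j hj; rewrite eq_sym (negbTE hj) subn0.
Qed.

Lemma n_words_fact N q : \sum_j q j = N -> n_words N q * \prod_j (q j)`! = N`!.
Proof.
elim: N q => [|N IHN] q hq.
  have q0 j : q j = 0.
    by apply/eqP; rewrite -leqn0 -hq (bigD1 j) //= leq_addr.
  rewrite big1 => [|j _]; last by rewrite q0.
  rewrite muln1 /n_words (eq_bigr (fun _ => 1)) ?sum1_card ?card_tuple //.
  move=> w _; rewrite (tuple0 w); apply/eqP; rewrite eqb1.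
  by apply/forallP => j; rewrite q0.
rewrite n_wordsS big_distrl /=.
rewrite (eq_bigr (fun x => q x * N`!)) => [|x hx]; last first.
  rewrite (prod_fact_remove_letter hx) mulnCA IHN //.
  by apply/eqP; rewrite -eqSS sum_remove_letter ?hq.
rewrite -big_distrl /= factS -hq; congr (_ * _).
rewrite [in RHS](bigID (fun x => 0 < q x)) /=.
by rewrite [X in _ = _ + X]big1 ?addn0 // => x; case: (q x).
Qed.

Definition fiber_count T q : nat :=
  #|[pred f : {ffun T -> 'I_S} | [forall j, #|[pred c | f c == j]| == q j]]|.

(* A map T -> 'I_S is a word of length #|T| via the enumeration of T. *)
Lemma fiber_count_words T q : fiber_count T q = n_words #|T| q.
Proof.
rewrite /fiber_count -sum1_card /n_words big_mkcond /=.
rewrite (reindex (@Finfun T 'I_S)) /=; last first.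
  by exists fgraph => x _; [rewrite FinfunK | rewrite fgraphK].
apply: eq_bigr => w _; rewrite inE; congr nat_of_bool; apply: eq_forallb => j.
rewrite -[w in RHS]FinfunK -codom_ffun /codom /image_mem count_map.
by rewrite cardE -size_filter enumT -deprecated_filter_index_enum.
Qed.

End Multinomial.

Lemma card_hand S (n : 'I_S -> nat) j : #|[set c : card_t n | tag c == j]| = n j.
Proof.
have -> : [set c : card_t n | tag c == j] =
    [set (Tagged (fun k => 'I_(n k)) i : card_t n) | i : 'I_(n j)].
  apply/setP => c; rewrite inE; apply/eqP/imsetP => [<-|[i _ ->] //].
  by exists (tagged c) => //; case: c.
by rewrite card_imset ?card_ord // => i1 i2; apply: eq_from_Tagged.
Qed.

Lemma card_card_t S (n : 'I_S -> nat) : #|card_t n| = \sum_j n j.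
Proof.
rewrite -sum1_card (partition_big tag predT) //=; apply: eq_bigr => j _.
by rewrite sum1dep_card -card_hand; apply: eq_card => c; rewrite inE.
Qed.

Section Relabel.

Variables (S : nat) (T : finType) (t : T -> 'I_S).

Definition owned (A : {set T}) (j : 'I_S) : nat := #|A :&: [set c | t c == j]|.

Lemma card_owned_sum (A : {set T}) : #|A| = \sum_j owned A j.
Proof.
rewrite -sum1_card (partition_big t predT) //=; apply: eq_bigr => j _.
by rewrite sum1dep_card /owned; apply: eq_card => c; rewrite !inE.
Qed.

Variable A : {set T}.

(* The owner-preserving identification of card_t (owned A) with A: the i-th
   card of player j is the i-th card of A owned by j. *)
Definition relabel (x : card_t (owned A)) : T :=
  @enum_val T (A :&: [set c | t c == tag x]) (tagged x).

Lemma relabel_in x : relabel x \in A.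
Proof. by have := enum_valP (tagged x); rewrite inE => /andP []. Qed.

Lemma relabel_owner x : t (relabel x) = tag x.
Proof. by have := enum_valP (tagged x); rewrite !inE => /andP [] _ /eqP. Qed.

Lemma relabel_inj : injective relabel.
Proof.
move=> x y exy; have etag : tag x = tag y by rewrite -!relabel_owner exy.
move: exy; case: x etag => j i; case: y => k i' /= ejk; subst k.
by rewrite /relabel /= => /enum_val_inj ->.
Qed.

Lemma relabel_onto : [set relabel x | x in card_t (owned A)] = A.
Proof.
apply/eqP; rewrite eqEcard; apply/andP; split.
  by apply/subsetP => c /imsetP [x _ ->]; apply: relabel_in.
rewrite card_imset; last exact: relabel_inj.
by rewrite card_card_t card_owned_sum.
Qed.

Lemma relabel_count (f : T -> 'I_S) j :
  #|[pred x : card_t (owned A) | f (relabel x) == j]| = #|A :&: [set c | f c == j]|.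
Proof.
have -> : A :&: [set c | f c == j] =
    [set relabel x | x in [set x | f (relabel x) == j]].
  apply/setP => c; rewrite !inE; apply/andP/imsetP => [[cA fc]|[x]].
    rewrite -relabel_onto in cA; case/imsetP: cA => x _ ecx.
    by exists x => //; rewrite inE -ecx.
  by rewrite inE => fx ->; split => //; apply: relabel_in.
by rewrite card_imset; [apply: eq_card => x; rewrite !inE | apply: relabel_inj].
Qed.

Lemma relabel_surj c : c \in A -> exists x, c = relabel x.
Proof.
move=> cA; have : c \in [set relabel x | x in card_t (owned A)] by rewrite relabel_onto.
by case/imsetP => x _ ->; exists x.
Qed.

Definition extend (g : {ffun card_t (owned A) -> 'I_S}) : {ffun T -> 'I_S} :=
  [ffun c => if [pick x | relabel x == c] is Some x then g x else t c].

Lemma extend_relabel g x : extend g (relabel x) = g x.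
Proof.
rewrite ffunE; case: pickP => [y /eqP /relabel_inj -> //|/(_ x)].
by rewrite eqxx.
Qed.

Lemma extend_out g c : c \notin A -> extend g c = t c.
Proof.
rewrite ffunE; case: pickP => [y /eqP <-|//].
by rewrite relabel_in.
Qed.

Definition moving_exactly (q : 'I_S -> nat) : nat :=
  #|[pred f : {ffun T -> 'I_S} |
      [forall c, if c \in A then f c != t c else f c == t c]
      && [forall j, #|A :&: [set c | f c == j]| == q j]]|.

(* Such maps are the block derangements of A, through the relabeling:
   restriction along relabel is a bijection, with inverse extend. *)
Lemma moving_exactly_E : moving_exactly (owned A) = E (owned A).
Proof.
set n := owned A.
pose D := [set f : {ffun T -> 'I_S} |
  [forall c, if c \in A then f c != t c else f c == t c]
  && [forall j, #|A :&: [set c | f c == j]| == n j]].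
pose restrict (f : {ffun T -> 'I_S}) : {ffun card_t n -> 'I_S} :=
  [ffun x => f (relabel x)].
have -> : moving_exactly n = #|D| by apply: eq_card => f; rewrite !inE.
have restrict_inj : {in D &, injective restrict}.
  move=> f1 f2; rewrite !inE => /andP [/forallP H1 _] /andP [/forallP H2 _] ef.
  apply/ffunP => c; move: (H1 c) (H2 c); case: (boolP (c \in A)) => [cA|_].
    case: (relabel_surj cA) => x -> _ _.
    by move/ffunP: ef => /(_ x); rewrite !ffunE.
  by move=> /eqP -> /eqP ->.
rewrite -(card_in_imset restrict_inj); apply: eq_card => g.
rewrite [in RHS]inE; apply/imsetP/idP => [[f]|/andP [/forallP G1 /forallP G2]].
  rewrite !inE => /andP [/forallP H1 /forallP H2] ->.
  apply/andP; split; apply/forallP.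
    move=> j; rewrite -(eqP (H2 j)) -relabel_count.
    by apply/eqP; apply: eq_card => x; rewrite !inE ffunE.
  by move=> x; rewrite ffunE; move: (H1 (relabel x)); rewrite relabel_in relabel_owner.
exists (extend g); last by apply/ffunP => x; rewrite ffunE extend_relabel.
rewrite inE; apply/andP; split; apply/forallP.
  move=> c; case: (boolP (c \in A)) => [cA|cNA]; last by rewrite extend_out.
  by case: (relabel_surj cA) => x ->; rewrite extend_relabel relabel_owner G2.
move=> j; rewrite -relabel_count -(eqP (G1 j)).
by apply/eqP; apply: eq_card => x; rewrite !inE extend_relabel.
Qed.

End Relabel.

Lemma fiber_count_by_moved S (T : finType) (t : T -> 'I_S) :
  fiber_count T (owned t setT) = \sum_(A : {set T}) moving_exactly t A (owned t A).
Proof.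
rewrite /fiber_count -sum1_card.
rewrite (partition_big (fun f : {ffun T -> 'I_S} => [set c | f c != t c]) predT) //=.
apply: eq_bigr => A _; rewrite sum1_card; apply: eq_card => f; rewrite !inE.
have moved_eq : ([set c | f c != t c] == A) =
    [forall c, if c \in A then f c != t c else f c == t c].
  apply/eqP/forallP => [<- c|H]; first by rewrite inE; case: eqP.
  apply/setP => c; rewrite inE; move: (H c).
  by case: (c \in A) => // /eqP ->; rewrite eqxx.
rewrite unfold_in /= andbC moved_eq; case Hf: [forall c, _] => //=.
apply: eq_forallb => j.
have fixed_eq : ~: A :&: [set c | f c == j] = ~: A :&: [set c | t c == j].
  apply/setP => c; rewrite !inE; move/forallP: Hf => /(_ c).
  by case: (c \in A) => //= /eqP ->.
have split_A (B : {set T}) : #|B| = #|A :&: B| + #|~: A :&: B|.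
  by rewrite -(cardsID A B) setDE [B :&: A]setIC [B :&: ~: A]setIC.
rewrite /owned setTI (split_A [set c | t c == j]) -fixed_eq.
have -> : #|[pred c | f c == j]| = #|[set c | f c == j]|.
  by apply: eq_card => c; rewrite inE.
by rewrite (split_A [set c | f c == j]) eqn_add2r.
Qed.

Lemma card_sets_by_owner S (T : finType) (t : T -> 'I_S) (n : 'I_S -> nat) :
  #|[set A : {set T} | [forall j, owned t A j == n j]]| =
  \prod_j 'C(owned t setT j, n j).
Proof.
pose class j := [set c | t c == j].
pose F j := [pred X : {set T} | (X \subset class j) && (#|X| == n j)].
pose split_set (A : {set T}) : {ffun 'I_S -> {set T}} := [ffun j => A :&: class j].
have split_inj : injective split_set.
  move=> A1 A2 eA; apply/setP => c.
  have := congr1 (fun g : {ffun 'I_S -> {set T}} => c \in g (t c)) eA.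
  by rewrite /= !ffunE !inE eqxx !andbT.
have in_class (X : {set T}) j c : X \subset class j -> c \in X -> t c = j.
  by move=> sX cX; move/subsetP: sX => /(_ c cX); rewrite inE => /eqP.
have -> : \prod_j 'C(owned t setT j, n j) = #|family F|.
  rewrite card_family foldrE big_image /=; apply: eq_bigr => j _.
  by rewrite /owned setTI -cards_draws; apply: eq_card => X; rewrite !inE.
rewrite -(card_imset _ split_inj); apply: eq_card => g.
apply/imsetP/familyP => [[A]|Hg].
  by rewrite inE => /forallP HA -> j; rewrite !inE ffunE subsetIr /=; apply: HA.
have glue j : [set c | c \in g (t c)] :&: class j = g j.
  move: (Hg j); rewrite !inE => /andP [sg _].
  apply/setP => c; rewrite !inE; apply/andP/idP => [[cg /eqP <-] //|cj].
  by rewrite (in_class _ _ _ sg cj) cj.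
exists [set c | c \in g (t c)]; last by apply/ffunP => j; rewrite ffunE glue.
rewrite inE; apply/forallP => j; rewrite /owned glue.
by move: (Hg j); rewrite !inE => /andP [].
Qed.

Lemma multinom_fiber_count S (p : 'I_S -> nat) : multinom p = fiber_count (card_t p) p.
Proof.
rewrite fiber_count_words card_card_t /multinom.
rewrite -(n_words_fact (erefl (\sum_j p j))) mulnK //.
by apply: prodn_gt0 => j; apply: fact_gt0.
Qed.

Lemma owned_tag S (p : 'I_S -> nat) : owned (tag : card_t p -> 'I_S) setT = p.
Proof. by apply: functional_extensionality => j; rewrite /owned setTI card_hand. Qed.

Lemma multinom_expansion (S M : nat) (p : 'I_S -> nat) : (forall j, p j < M) ->
  multinom p = \sum_(n : {ffun 'I_S -> 'I_M})
                 (\prod_(j < S) 'C(p j, n j)) * E (fun j => nat_of_ord (n j)).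
Proof.
move=> hp; set t := (tag : card_t p -> 'I_S).
rewrite multinom_fiber_count -{2}(owned_tag p) fiber_count_by_moved.
under eq_bigr do rewrite moving_exactly_E.
have owned_lt (A : {set card_t p}) j : owned t A j < M.
  apply: leq_ltn_trans (hp j); rewrite -{2}(owned_tag p).
  by apply: subset_leq_card; apply: setSI; apply: subsetT.
pose profile A : {ffun 'I_S -> 'I_M} := [ffun j => Ordinal (owned_lt A j)].
transitivity (\sum_(n : {ffun 'I_S -> 'I_M})
    \sum_(A : {set card_t p} | [forall j, owned t A j == n j]) E (owned t A)).
  rewrite [RHS](exchange_big_dep predT) //=; apply: eq_bigr => A _.
  rewrite (big_pred1 (profile A)) // => n /=.
  apply/forallP/eqP => [H|-> j]; last by rewrite ffunE.
  by apply/ffunP => j; apply: val_inj; rewrite ffunE /=; apply/esym/eqP.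
apply: eq_bigr => n _.
have card_sets := card_sets_by_owner t (fun j => nat_of_ord (n j)).
rewrite owned_tag in card_sets.
rewrite -card_sets -sum1_card big_distrl /=.
apply: eq_big => [A|A HA]; first by rewrite inE.
rewrite mul1n; congr E; apply: functional_extensionality => j.
by move/forallP: HA => /(_ j) /eqP.
Qed.

(* Expand each multinomial, exchange the sums and sum the binomials over the
   box; the profiles n outside the box contribute C(m_j, n_j + 1) = 0. *)
Theorem mainTheorem10 (S : nat) (m : 'I_S -> nat)
    (hm : forall j : 'I_S, 0 < m j) :
  B m =
  \sum_(l : {ffun 'I_S -> 'I_(\max_(j < S) m j)} | [forall j, l j < m j])
     multinom (fun j => nat_of_ord (l j)).
Proof.
set M := \max_(j < S) m j.
have hM j : m j <= M by apply: (leq_bigmax j).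
under [RHS]eq_bigr => l _ do rewrite (multinom_expansion (M := M)) //.
rewrite exchange_big /=.
under [RHS]eq_bigr do rewrite -big_distrl /= box_sum_binomial //.
rewrite /B (bigID (fun n : {ffun 'I_S -> 'I_M} => [forall j, n j < m j]) predT) /=.
rewrite [X in _ = _ + X]big1 ?addn0 // => n /forallPn [j].
by rewrite -leqNgt => hj; rewrite (bigD1 j) //= bin_small // ltnS.
Qed.
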